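(* For any signature $\Sigma$, the map $r_{A_p(\Sigma)}:\mathbf N(T(\Sigma))\to\mathbb K\langle A_p(\Sigma)\rangle$ is injective.
   Context: $\mathbb K$ is a field of characteristic zero. A signature is a set $\Sigma$ with arity map $|\cdot|:\Sigma\to\mathbb N$. A $\Sigma$-term is the leaf $\bot$ or $s(t_1,\dots,t_n)$ with $s$ of arity $n$, $t_i$ terms; degree = number of internal nodes. A $\Sigma$-forest is a finite word of terms; reduced if no term is $\bot$. $\mathbf N(T(\Sigma))$ is the vector space (natural Hopf algebra of the free operad) with basis $E_f$ indexed by reduced $\Sigma$-forests $f$. Internal nodes of a forest $f$ are identified with $1,\dots,\deg f$ by left-to-right preorder; $d_f(i)$ is the decoration of $i$; $i\to^f_j i'$ means $i'$ is the $j$-th child of $i$; roots are the roots of the terms. A $\Sigma$-forest-like alphabet is a set $A$ with arbitrary: subset $R^A$, subsets $D^A_s$ ($s\in\Sigma$), binary relations $\to^A_j$ ($j\ge1$). $\mathbb K\langle A\rangle$: noncommutative polynomials with possibly infinite support and bounded degree. A word $w\in A^*$ is $A$-compatible with $f$ if it has length $\deg f$, $w(i)\in R^A$ for each root $i$, $w(i)\in D^A_{d_f(i)}$ for each node $i$, and $i\to^f_j i'$ implies $w(i)\to^A_j w(i')$; $r_A$ is the linear map with $r_A(E_f)=\sum_{w\in A^*}[w\ A\text{-compatible with }f]\,w$. The alphabet of positions $A_p(\Sigma)=\{a^s_u: s\in\Sigma,\ u\in\mathbb N^*\}$ has root relation $\{a^s_{0^\ell}:s\in\Sigma,\ell\in\mathbb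 N\}$, $D_s=\{a^s_u:u\in\mathbb N^*\}$, and $a^s_u\to_j a^{s'}_v$ iff $v=u\,j\,0^\ell$ for some $\ell\in\mathbb N$. *)

From mathcomp Require Import all_boot all_algebra.
From mathcomp Require Import boolp.
From Stdlib Require List.
Set Implicit Arguments. Unset Strict Implicit. Unset Printing Implicit Defensive.
Import GRing.Theory.

Section Terms.
Variable Sig : Type.
Variable arity : Sig -> nat.

Inductive term : Type :=
| Bot : term
| Node : Sig -> seq term -> term.

Fixpoint wf_term (t : term) : Prop :=
  match t with
  | Bot => True
  | Node s ts => size ts = arity s /\ (fix wfl (l : seq term) : Prop :=
        match l with [::] => True | u :: us => wf_term u /\ wfl us end) ts
  end.

Fixpoint deg_term (t : term) : nat :=
  match t with Bot => 0 | Node _ ts => (sumn (map deg_term ts)).+1 end.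

Fixpoint decs_term (t : term) : seq Sig :=
  match t with Bot => [::] | Node s ts => s :: flatten (map decs_term ts) end.

(* edges (i, j, i') meaning: node i' is the j-th child (j >= 1) of node i,
   internal nodes being numbered in preorder starting at offset k *)
Fixpoint edges_term (t : term) (k : nat) : seq (nat * nat * nat) :=
  match t with
  | Bot => [::]
  | Node _ ts =>
    (fix go (l : seq term) (j off : nat) : seq (nat * nat * nat) :=
       match l with
       | [::] => [::]
       | u :: us =>
         (if u is Node _ _ then [:: (k, j, off)] else [::])
           ++ edges_term u off ++ go us j.+1 (off + deg_term u)
       end) ts 1 k.+1
  end.

Definition forest := seq term.

Definition wf_forest (f : forest) : Prop := forall t, List.In t f -> wf_term t.
Definition reduced (f : forest) : Prop := forall t, List.In t f -> t <> Bot.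

Definition deg (f : forest) : nat := sumn (map deg_term f).
Definition decs (f : forest) : seq Sig := flatten (map decs_term f).

Fixpoint edges_from (f : forest) (off : nat) : seq (nat * nat * nat) :=
  match f with
  | [::] => [::]
  | t :: ts => edges_term t off ++ edges_from ts (off + deg_term t)
  end.
Definition edges (f : forest) := edges_from f 0.

Fixpoint roots_from (f : forest) (off : nat) : seq nat :=
  match f with
  | [::] => [::]
  | t :: ts => (if t is Node _ _ then [:: off] else [::])
                 ++ roots_from ts (off + deg_term t)
  end.
Definition roots (f : forest) := roots_from f 0.

Record fl_alphabet := FLAlphabet {
  letter :> Type;
  rootA : letter -> Prop;
  decA : Sig -> letter -> Prop;
  childA : nat -> letter -> letter -> Prop
}.

(* A-compatibility of a word with a forest (internal nodes are numbered
   0, ..., deg f - 1 in preorder; letter i of w is onth w i) *)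
Definition compatible (A : fl_alphabet) (w : seq A) (f : forest) : Prop :=
  [/\ size w = deg f,
      forall i a, i \in roots f -> onth w i = Some a -> rootA a,
      forall i s a, onth (decs f) i = Some s -> onth w i = Some a -> decA s a
    & forall i j i' a b, (i, j, i') \in edges f ->
        onth w i = Some a -> onth w i' = Some b -> childA j a b].

(* coefficient of the word w in r_A(E_f) *)
Definition rA_coef (K : nzRingType) (A : fl_alphabet) (f : forest) (w : seq A) : K :=
  (if pselect (compatible w f) then 1 else 0)%R.

(* the alphabet of positions A_p(Sigma): a^s_u is the pair (s, u) *)
Definition Ap : fl_alphabet :=
  @FLAlphabet (Sig * seq nat)
    (fun a => exists l, a.2 = nseq l 0%N)
    (fun s a => a.1 = s)
    (fun j a b => exists l, b.2 = a.2 ++ j :: nseq l 0%N).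

End Terms.

From mathcomp Require Import all_boot all_algebra.
From mathcomp Require Import boolp zify.
Import GRing.Theory.

(* Label every internal node of a forest by its address: the root of the m-th
   tree gets 0^m and the j-th child of a node at u gets u j.  Reading the
   letters a^{d(i)}_{u(i)} in preorder gives the positions word of the forest,
   which is A_p-compatible with it.  In a positions word all the zeros of an
   address form a leading block; since a child address is u j 0^l with j > 0,
   this forces l = 0, so every word of this kind compatible with a reduced
   forest g is a positions word of g (up to the root addresses).  Positions
   words are a prefix-free serialization of reduced well-formed forests, hence
   determine them.  So r_{A_p}(E_f) is the only image with a nonzero coefficient
   on the positions word of f, and the family is triangular with unit diagonal. *)

Set Implicit Arguments. Unset Strict Implicit. Unset Printing Implicit Defensive.

Lemma onth_size_cat (T : Type) (s1 : seq T) x s2 : onth (s1 ++ x :: s2) (size s1) = Some x.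
Proof. by rewrite onth_cat ltnn subnn. Qed.

Lemma onth_lt (T : Type) (s : seq T) i : i < size s -> exists x, onth s i = Some x.
Proof. by rewrite -onthTE; case: onth => // x _; exists x. Qed.

Section Positions.
Variables (Sig : Type) (arity : Sig -> nat).
Local Notation term := (term Sig).
Local Notation letter := (Sig * seq nat)%type.

Fixpoint term_nested_ind (Q : term -> Prop) (Q_Bot : Q (Bot Sig))
    (Q_Node : forall s ts, List.Forall Q ts -> Q (Node s ts)) (t : term) : Q t :=
  match t with
  | Bot => Q_Bot
  | Node s ts => Q_Node s ts ((fix all_Q (us : seq term) : List.Forall Q us :=
      match us with
      | [::] => List.Forall_nil Q
      | u :: us => List.Forall_cons u (term_nested_ind Q_Bot Q_Node u) (all_Q us)
      end) ts)
  end.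

Lemma deg_term_gt0 (t : term) : t <> Bot Sig -> 0 < deg_term t.
Proof. by case: t. Qed.

Lemma reduced_cons (t : term) ts : reduced (t :: ts) -> t <> Bot Sig /\ reduced ts.
Proof. by move=> H; split=> [|u Hu]; apply: H; [left | right]. Qed.

Lemma wf_forest_cons (t : term) ts :
  wf_forest arity (t :: ts) -> wf_term arity t /\ wf_forest arity ts.
Proof. by move=> H; split=> [|u Hu]; apply: H; [left | right]. Qed.

Lemma mem_roots_from_head (t : term) ts off :
  t <> Bot Sig -> off \in roots_from (t :: ts) off.
Proof. by case: t => // s us _; rewrite /= mem_head. Qed.

Fixpoint children_word (word : term -> seq nat -> seq letter) (P : seq nat)
    (us : seq term) (j : nat) : seq letter :=
  if us is u :: us then word u (rcons P j) ++ children_word word P us j.+1 else [::].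

Fixpoint pos_word (t : term) (P : seq nat) : seq letter :=
  if t is Node s ts then (s, P) :: children_word pos_word P ts 1 else [::].

Local Notation pos_children := (children_word pos_word).

Lemma children_word_cons word P u us j :
  children_word word P (u :: us) j = word u (rcons P j) ++ children_word word P us j.+1.
Proof. by []. Qed.

Lemma pos_wordE s ts P : pos_word (Node s ts) P = (s, P) :: pos_children P ts 1.
Proof. by []. Qed.

Lemma size_pos_word t P : size (pos_word t P) = deg_term t.
Proof.
elim/term_nested_ind: t P => // s ts IH P; rewrite pos_wordE /=; congr S.
by elim: IH P 1 => //= u us Hu _ IHus P j; rewrite size_cat Hu IHus.
Qed.

Lemma map_fst_pos_word t P : map fst (pos_word t P) = decs_term t.
Proof.
elim/term_nested_ind: t P => // s ts IH P; rewrite pos_wordE /=; congr cons.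
by elim: IH P 1 => //= u us Hu _ IHus P j; rewrite map_cat Hu IHus.
Qed.

Lemma pos_word_addresses t P :
  {in map snd (pos_word t P), forall u, exists2 q, u = P ++ q & 0 \notin q}.
Proof.
elim/term_nested_ind: t P => [|s ts IH] P u //.
rewrite pos_wordE /= inE => /predU1P[->|]; first by exists [::]; rewrite ?cats0.
have : 1 != 0 by [].
elim: IH 1 => //= v vs Hv _ IHvs j j_neq0.
rewrite map_cat mem_cat => /orP[/Hv [q -> q0]|]; last exact: IHvs.
exists (j :: q); first by rewrite -cats1 -catA.
by rewrite inE negb_or eq_sym j_neq0.
Qed.

Section EdgesChildren.
Variable k : nat.

Fixpoint edges_children (us : seq term) (j off : nat) : seq (nat * nat * nat) :=
  if us is u :: us then
    (if u is Node _ _ then [:: (k, j, off)] else [::])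
      ++ edges_term u off ++ edges_children us j.+1 (off + deg_term u)
  else [::].

End EdgesChildren.

Lemma edges_termE s ts k : edges_term (Node s ts) k = edges_children k ts 1 k.+1.
Proof. by []. Qed.

Definition child_letters (w : seq letter) (i j i' : nat) : Prop :=
  exists a b, [/\ onth w i = Some a, onth w i' = Some b & b.2 = rcons a.2 j].

Lemma pos_word_edges t P pre post i j i' : (i, j, i') \in edges_term t (size pre) ->
  child_letters (pre ++ pos_word t P ++ post) i j i'.
Proof.
elim/term_nested_ind: t P pre post => // s ts IH P pre post.
have : onth (rcons pre (s, P) ++ pos_children P ts 1 ++ post) (size pre) = Some (s, P).
  by rewrite cat_rcons onth_size_cat.
rewrite edges_termE pos_wordE cat_cons -cat_rcons -(size_rcons pre (s, P)).
move: (rcons pre (s, P)) 1 post; elim: IH => // u us Hu _ IHus pre' j0 post parent.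
rewrite children_word_cons -catA in parent *.
rewrite [edges_children _ _ _ _]/= !mem_cat => /or3P[| Hin | Hin].
- case: u {Hu} parent => // s' ts' parent; rewrite mem_seq1 => /eqP[-> -> ->].
  by exists (s, P), (s', rcons P j0); split; rewrite // pos_wordE onth_size_cat.
- exact: Hu.
- have := IHus (pre' ++ pos_word u (rcons P j0)) j0.+1 post.
  by rewrite size_cat size_pos_word -catA; apply.
Qed.

Fixpoint pos_forest_word (f : forest Sig) (ls : seq nat) : seq letter :=
  match f, ls with
  | t :: ts, l :: ls => pos_word t (nseq l 0) ++ pos_forest_word ts ls
  | _, _ => [::]
  end.

Lemma size_pos_forest_word f ls :
  size ls = size f -> size (pos_forest_word f ls) = deg f.
Proof.
elim: f ls => [|t ts IH] [|l ls] //= [/IH Hs].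
by rewrite size_cat size_pos_word Hs.
Qed.

Lemma map_fst_pos_forest_word f ls :
  size ls = size f -> map fst (pos_forest_word f ls) = decs f.
Proof.
elim: f ls => [|t ts IH] [|l ls] //= [/IH Hs].
by rewrite map_cat map_fst_pos_word Hs.
Qed.

Lemma pos_forest_word_edges f ls pre i j i' : size ls = size f ->
  (i, j, i') \in edges_from f (size pre) -> child_letters (pre ++ pos_forest_word f ls) i j i'.
Proof.
elim: f ls pre => [|t ts IH] [|l ls] pre //= [Hs]; rewrite mem_cat => /orP[Hin|Hin].
- exact: pos_word_edges.
- by rewrite catA; apply: IH; rewrite // size_cat size_pos_word.
Qed.

Lemma pos_forest_word_roots f ls pre i : size ls = size f -> i \in roots_from f (size pre) ->
  exists a l, onth (pre ++ pos_forest_word f ls) i = Some a /\ a.2 = nseq l 0.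
Proof.
elim: f ls pre => [|t ts IH] [|l ls] pre //= [Hs]; rewrite mem_cat => /orP[|Hin].
- case: t => // s ts'; rewrite mem_seq1 => /eqP ->.
  by exists (s, nseq l 0), l; rewrite pos_wordE onth_size_cat.
- by rewrite catA; apply: IH; rewrite // size_cat size_pos_word.
Qed.

Lemma pos_forest_word_compatible f ls : size ls = size f ->
  @compatible _ (Ap Sig) (pos_forest_word f ls) f.
Proof.
move=> Hs; split.
- exact: size_pos_forest_word.
- move=> i a /(pos_forest_word_roots (pre := [::]) Hs) [b [l [Hb El]]].
  by rewrite Hb => -[<-]; exists l.
- move=> i s a; rewrite -(map_fst_pos_forest_word Hs) onth_map => + Ha.
  by rewrite Ha => -[<-].
- move=> i j i' a b /(pos_forest_word_edges (pre := [::]) Hs) [a' [b' [Ha' Hb' E]]].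
  by rewrite Ha' Hb' => -[<-] [<-]; exists 0; rewrite E cats1.
Qed.

Definition exits (P : seq nat) (r : seq letter) : bool :=
  if r is a :: _ then ~~ prefix P a.2 else true.

Definition exits_after (P : seq nat) (j : nat) (r : seq letter) : Prop :=
  forall j', j <= j' -> exits (rcons P j') r.

Lemma exits_afterS P j r : exits_after P j r -> exits_after P j.+1 r.
Proof. by move=> Hr j' /ltnW; apply: Hr. Qed.

Lemma exits_after_exits P j r : exits P r -> exits_after P j r.
Proof.
case: r => // a r /= Ha j' _; apply: contra Ha.
exact: prefix_trans (prefix_rcons P j').
Qed.

Lemma head_pos_children P us j a :
  ohead (pos_children P us j) = Some a -> exists2 j', j <= j' & a.2 = rcons P j'.
Proof.
elim: us j => // u us IH j; rewrite children_word_cons.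
case: u => [|s ts] /=; last by move=> [<-]; exists j.
by move/IH => [j' /ltnW Hj' ->]; exists j'.
Qed.

Lemma exits_children P us j r :
  exits_after P j r -> exits (rcons P j) (pos_children P us j.+1 ++ r).
Proof.
case E: (pos_children P us j.+1) => [|a c] Hr /=; first exact: Hr.
have := @head_pos_children P us j.+1 a; rewrite E => /(_ erefl) [j' Hj' ->].
by rewrite -!cats1 prefix_catr //= eqxx /= (ltn_eqF Hj').
Qed.

Fixpoint wf_terms (us : seq term) : Prop :=
  if us is u :: us then wf_term arity u /\ wf_terms us else True.

Lemma wf_termE s ts : wf_term arity (Node s ts) = (size ts = arity s /\ wf_terms ts).
Proof. by []. Qed.

Definition pos_word_cancellable (t : term) : Prop := forall t' P r r',
  wf_term arity t -> wf_term arity t' -> exits P r -> exits P r' ->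
  pos_word t P ++ r = pos_word t' P ++ r' -> t = t' /\ r = r'.

Lemma pos_children_cancel us us' P j r r' : List.Forall pos_word_cancellable us ->
  wf_terms us -> wf_terms us' -> size us = size us' ->
  exits_after P j r -> exits_after P j r' ->
  pos_children P us j ++ r = pos_children P us' j ++ r' -> us = us' /\ r = r'.
Proof.
move=> IH; elim: IH us' j => [|u vs Hu _ IHus] [|u' vs'] j //.
move=> [wu wus] [wu' wus'] [Hs] Hr Hr'; rewrite !children_word_cons -!catA => E.
have [<- {}E] := Hu _ _ _ _ wu wu' (exits_children vs Hr) (exits_children vs' Hr') E.
by have [<- <-] := IHus vs' j.+1 wus wus' Hs (exits_afterS Hr) (exits_afterS Hr') E.
Qed.

(* Only [exits_after P 1] is required of what follows a node: in a forest the
   next root 0^(l+1) does lie in the subtree of the root 0^l. *)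
Lemma pos_node_cancel s ts s' ts' P r r' : List.Forall pos_word_cancellable ts ->
  wf_term arity (Node s ts) -> wf_term arity (Node s' ts') ->
  exits_after P 1 r -> exits_after P 1 r' ->
  pos_word (Node s ts) P ++ r = pos_word (Node s' ts') P ++ r' ->
  Node s ts = Node s' ts' /\ r = r'.
Proof.
move=> IH; rewrite !wf_termE !pos_wordE => -[Hs wts] [Hs' wts'] Hr Hr' [Es E]; subst s'.
by have [-> ->] := pos_children_cancel IH wts wts' (etrans Hs (esym Hs')) Hr Hr' E.
Qed.

Lemma pos_word_cancel t : pos_word_cancellable t.
Proof.
elim/term_nested_ind: t => [|s ts IH] [|s' ts'] P r r' //.
- by move=> _ _ Hr _ /= E; move: Hr; rewrite E /= prefix_refl.
- by move=> _ _ _ Hr' /= E; move: Hr'; rewrite -E /= prefix_refl.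
move=> wt wt' Hr Hr'.
exact: pos_node_cancel IH wt wt' (exits_after_exits Hr) (exits_after_exits Hr').
Qed.

Lemma pos_forest_word_exits_after P f ls : exits_after P 1 (pos_forest_word f ls).
Proof.
move=> j' j'_gt0; elim: f ls => [|t ts IH] [|l ls] //=.
case: t => [|s ts']; first exact: IH.
rewrite pos_wordE cat_cons /=; apply: contraL j'_gt0 => /prefixP [q Eq].
have : j' \in nseq l 0 by rewrite Eq mem_cat mem_rcons mem_head.
by rewrite mem_nseq => /andP[_ /eqP ->].
Qed.

Lemma pos_forest_word_inj g f ls ms : wf_forest arity g -> wf_forest arity f ->
  reduced g -> reduced f -> size ls = size g -> size ms = size f ->
  pos_forest_word g ls = pos_forest_word f ms -> g = f.
Proof.
elim: g f ls ms => [|t ts IH] [|t' ts'] [|l ls] [|m ms] // wg wf rg rf.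
- by have [] := reduced_cons rf; case: t' {wf rf} => // s us _ _ _ _; rewrite /= pos_wordE.
- by have [] := reduced_cons rg; case: t {wg rg IH} => // s us _ _ _ _; rewrite /= pos_wordE.
move=> [Hls] [Hms] /= E.
have [wt wts] := wf_forest_cons wg; have [wt' wts'] := wf_forest_cons wf.
have [+ rts] := reduced_cons rg; have [+ rts'] := reduced_cons rf.
case: t wt E {wg rg} => // s us wt; case: t' wt' {wf rf} => // s' us' wt' E _ _.
have Elm : l = m.
  by move: E; rewrite !pos_wordE => -[_ /(congr1 size)]; rewrite !size_nseq.
have cancel_us : List.Forall pos_word_cancellable us.
  by apply/List.Forall_forall => u _; apply: pos_word_cancel.
subst m; have [-> E'] := pos_node_cancel cancel_us wt wt'
  (pos_forest_word_exits_after _ _ _) (pos_forest_word_exits_after _ _ _) E.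
by rewrite (IH ts' ls ms wts wts' rts rts' Hls Hms E').
Qed.

Definition zero_prefixed (u : seq nat) : Prop :=
  exists m q, u = nseq m 0 ++ q /\ 0 \notin q.

Lemma pos_forest_word_zero_prefixed f ls :
  {in map snd (pos_forest_word f ls), forall u, zero_prefixed u}.
Proof.
elim: f ls => [|t ts IH] [|l ls] //= u.
rewrite map_cat mem_cat => /orP[/pos_word_addresses [q -> q0]|/IH //].
by exists l, q.
Qed.

Lemma zero_prefixed_child P j l : 0 < j -> zero_prefixed (P ++ j :: nseq l 0) -> l = 0.
Proof.
case: l => // l j_gt0 [m [q [Eu q0]]]; exfalso.
case/lastP: q Eu q0 => [|q z].
- rewrite cats0 => Eu _; have : j \in nseq m 0 by rewrite -Eu mem_cat mem_head orbT.
  by rewrite mem_nseq => /andP[_ /eqP Ej]; rewrite Ej in j_gt0.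
- rewrite -addn1 nseqD -cat_cons catA cats1 -rcons_cat => /rcons_inj [_ <-].
  by rewrite mem_rcons mem_head.
Qed.

Section Reading.
Variable w : seq letter.
Hypothesis w_zero_prefixed : {in map snd w, forall u, zero_prefixed u}.

Definition respects (E : seq (nat * nat * nat)) : Prop :=
  forall i j i' a b, (i, j, i') \in E ->
    onth w i = Some a -> onth w i' = Some b -> @childA _ (Ap Sig) j a b.

Lemma respects_cat E1 E2 : respects (E1 ++ E2) -> respects E1 /\ respects E2.
Proof. by move=> H; split=> i j i' a b Hin; apply: H; rewrite mem_cat Hin ?orbT. Qed.

Definition reads_as_pos_word (t : term) : Prop := forall k P,
  k + deg_term t <= size w -> respects (edges_term t k) ->
  (forall a, onth w k = Some a -> a.2 = P) ->
  map snd (take (deg_term t) (drop k w)) = map snd (pos_word t P).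

Lemma read_pos_children k a us j off : List.Forall reads_as_pos_word us ->
  onth w k = Some a -> 0 < j -> off + sumn (map (@deg_term Sig) us) <= size w ->
  respects (edges_children k us j off) ->
  map snd (take (sumn (map (@deg_term Sig) us)) (drop off w)) =
    map snd (pos_children a.2 us j).
Proof.
move=> IH Ha; elim: IH j off => [|u vs Hu _ IHus] j off j_gt0 /=; first by rewrite take0.
move=> Hsz Hed; have [Hparent Hed'] := respects_cat Hed.
have [Hedu Hedus] := respects_cat Hed'.
rewrite takeD drop_drop !map_cat; congr cat; last first.
  by rewrite addnC; apply: IHus => //; lia.
case: u Hu Hparent Hsz Hedu {Hed Hed' Hedus} => [|s ts] Hu Hparent Hsz Hedu.
  by rewrite take0.
apply: Hu => // [|b Hb]; first lia.
have [l El] := Hparent k j off a b (mem_head _ _) Ha Hb.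
suff l0 : l = 0 by rewrite El l0 cats1.
apply: (@zero_prefixed_child a.2 j) => //; rewrite -El; apply: w_zero_prefixed.
by apply/onthP; exists off; rewrite onth_map Hb.
Qed.

Lemma read_pos_word t : reads_as_pos_word t.
Proof.
elim/term_nested_ind: t => [|s ts IH] k P; first by rewrite take0.
rewrite edges_termE /= => Hsz Hed HP.
have [a Ha] := @onth_lt _ w k ltac:(lia).
rewrite (drop_nth a) -?onthTE ?Ha // (onth_nth a a w k Ha) /= (HP a Ha).
congr cons; rewrite -(HP a Ha); apply: (read_pos_children (k := k)) => //; lia.
Qed.

Lemma read_pos_forest g off : reduced g -> off + deg g <= size w ->
  respects (edges_from g off) ->
  (forall i a, i \in roots_from g off -> onth w i = Some a -> @rootA _ (Ap Sig) a) ->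
  exists2 ls, size ls = size g &
    map snd (take (deg g) (drop off w)) = map snd (pos_forest_word g ls).
Proof.
elim: g off => [|t ts IH] off rg; first by exists [::]; rewrite ?take0.
have [t_neq rts] := reduced_cons rg.
rewrite /deg /= -/(deg ts) => Hsz Hed Hroots.
have [Hedt Hedts] := respects_cat Hed.
have [a Ha] := @onth_lt _ w off ltac:(have := deg_term_gt0 t_neq; lia).
have [l El] := Hroots off a (mem_roots_from_head ts off t_neq) Ha.
have [ls Hls E] := IH (off + deg_term t) rts ltac:(lia) Hedts
  (fun i b Hi => Hroots i b ltac:(by rewrite mem_cat Hi orbT)).
exists (l :: ls); first by rewrite /= Hls.
rewrite takeD drop_drop !map_cat addnC E; congr cat.
by apply: read_pos_word => [|//|b]; [lia | rewrite Ha => -[<-]].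
Qed.

Lemma compatible_zero_prefixed_word g : reduced g -> @compatible _ (Ap Sig) w g ->
  exists2 ls, size ls = size g & w = pos_forest_word g ls.
Proof.
move=> rg [Hsz Hroots Hdec Hed].
have [ls Hls] := read_pos_forest (off := 0) rg ltac:(by rewrite Hsz) Hed Hroots.
rewrite drop0 -Hsz take_size => Esnd; exists ls => //.
have size_decs : size (decs g) = size w.
  by rewrite Hsz -(map_fst_pos_forest_word Hls) size_map size_pos_forest_word.
have Efst : map fst w = decs g.
  apply: eq_from_onth_le => i; rewrite size_map size_decs maxnn => i_lt.
  have [a Ha] := onth_lt i_lt.
  have [s Hs] := @onth_lt _ (decs g) i ltac:(by rewrite size_decs).
  by rewrite onth_map Ha Hs /= (Hdec i s a Hs Ha).
rewrite -[w]zip_unzip -[pos_forest_word g ls]zip_unzip /unzip1 /unzip2 Esnd Efst.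
by rewrite map_fst_pos_forest_word.
Qed.

End Reading.

Lemma compatible_pos_forest_word_eq f g ls : wf_forest arity f -> reduced f ->
  wf_forest arity g -> reduced g -> size ls = size f ->
  @compatible _ (Ap Sig) (pos_forest_word f ls) g -> g = f.
Proof.
move=> wf rf wg rg Hls.
case/(compatible_zero_prefixed_word (@pos_forest_word_zero_prefixed f ls) rg) => ms Hms E.
exact: pos_forest_word_inj wg wf rg rf Hms Hls (esym E).
Qed.

End Positions.

Local Open Scope ring_scope.

Theorem proposition4p7 (K : fieldType) (charK : [pchar K] =i pred0)
  (Sig : Type) (arity : Sig -> nat)
  (n : nat) (f : 'I_n -> forest Sig) (c : 'I_n -> K) :
  injective f ->
  (forall i, wf_forest arity (f i)) ->
  (forall i, reduced (f i)) ->
  (forall w : seq (Ap Sig),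
      \sum_(i < n) c i * rA_coef K (f i) w = 0) ->
  forall i, c i = 0.
Proof.
move=> f_inj f_wf f_red Hsum i.
pose w : seq (Ap Sig) := pos_forest_word (f i) (iota 0 (size (f i))).
have coef_w j : rA_coef K (f j) w = (j == i)%:R.
  rewrite /rA_coef; case: pselect => [Hc|Hc] /=.
    have := compatible_pos_forest_word_eq (f_wf i) (f_red i) (f_wf j) (f_red j)
      (size_iota _ _) Hc.
    by move/f_inj ->; rewrite eqxx.
  case: eqP => // ji; case: Hc; rewrite ji.
  exact/pos_forest_word_compatible/size_iota.
have := Hsum w; rewrite (bigD1 i) //= big1 => [|j /negPf ji]; last by rewrite coef_w ji mulr0.
by rewrite coef_w eqxx mulr1 addr0.
Qed.
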